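(* $\mathcal{S}$ is a separating class for $SG(\mathbb{R})$: for every $f\in SG(\mathbb{R})$ and every $\phi\in\mathcal{S}$ the function $f\phi$ is piecewise continuous and absolutely integrable on $\mathbb{R}$, and if $f,g\in SG(\mathbb{R})$ satisfy $\int_{-\infty}^\infty f(x)\phi(x)\,dx=\int_{-\infty}^\infty g(x)\phi(x)\,dx$ for all $\phi\in\mathcal{S}$, then $f(x)=g(x)$ for all $x\in\mathbb{R}$.
   Context: A function $f:\mathbb{R}\to\mathbb{C}$ is piecewise continuous if on each bounded subinterval it is continuous except at finitely many points, at which it has finite one-sided limits. $PC_{bj}$ is the set of piecewise continuous $f:\mathbb{R}\to\mathbb{C}$ satisfying $f(x)=\tfrac12\big(f(x+)+f(x-)\big)$ for every $x\in\mathbb{R}$. $SG(\mathbb{R})$ is the set of $f\in PC_{bj}$ for which there exist constants $C>0$ and $N\in\mathbb{N}$ with $\int_{-R}^{R}|f(x)|\,dx\le C(1+R)^N$ for all $R>0$. $\mathcal{S}$ (the Schwartz class) is the set of infinitely differentiable $\phi:\mathbb{R}\to\mathbb{C}$ with $\lim_{x\to\pm\infty}x^m\phi^{(n)}(x)=0$ for all integers $m,n\ge 0$. *)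

From Stdlib Require Import Reals List.
From Coquelicot Require Import Coquelicot.
Open Scope R_scope.

Definition one_sided_limits (f : R -> C) (x : R) (lp lm : C) : Prop :=
  filterlim f (at_right x) (locally lp) /\ filterlim f (at_left x) (locally lm).

Definition piecewise_continuous (f : R -> C) : Prop :=
  forall a b : R, exists l : list R,
    (forall x, a <= x <= b -> ~ In x l -> continuous f x) /\
    (forall x, In x l -> exists lp lm : C, one_sided_limits f x lp lm).

Definition PC_bj (f : R -> C) : Prop :=
  piecewise_continuous f /\
  forall x : R, exists lp lm : C,
    one_sided_limits f x lp lm /\ f x = ((lp + lm) / 2)%C.

Definition SG (f : R -> C) : Prop :=
  PC_bj f /\
  exists (K : R) (N : nat), 0 < K /\
    forall r : R, 0 < r -> RInt (fun x => Cmod (f x)) (- r) r <= K * (1 + r) ^ N.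

(* real-valued Schwartz conditions; a function R -> C is differentiable
   (n times) iff its real and imaginary parts are, with componentwise derivatives *)
Definition smooth_decay (u : R -> R) : Prop :=
  (forall (n : nat) (x : R), ex_derive (Derive_n u n) x) /\
  (forall m n : nat,
     is_lim (fun x => x ^ m * Derive_n u n x) p_infty 0 /\
     is_lim (fun x => x ^ m * Derive_n u n x) m_infty 0).

Definition Schwartz (phi : R -> C) : Prop :=
  smooth_decay (fun x => Re (phi x)) /\ smooth_decay (fun x => Im (phi x)).

Definition int_R (h : R -> C) : C :=
  @RInt_gen C_R_CompleteNormedModule h (Rbar_locally m_infty) (Rbar_locally p_infty).

Definition abs_integrable (h : R -> C) : Prop :=
  ex_RInt_gen (fun x => Cmod (h x)) (Rbar_locally m_infty) (Rbar_locally p_infty).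

(* Cutting
   [-r, r] into the unit shells n <= |x| <= n + 1, the growth bound
   int_{-n-1}^{n+1} |f| <= K (n + 2)^N and the decay |phi x| <= D (1 + |x|)^(-N-2) make the shell
   contributions to int |f phi| summable, so the partial integrals are bounded and the improper
   integral converges absolutely.
   For uniqueness, test h = f - g against (multiples of) the Gaussians exp (-s^2 (x - x0)^2): as s
   grows they concentrate at x0 symmetrically, so the vanishing integrals force
   h(x0+) + h(x0-) = 0, i.e. f x0 = g x0 because both are the means of their one-sided limits. *)

From Stdlib Require Import Reals List Lra Lia Classical.
From Coquelicot Require Import Coquelicot.
Open Scope R_scope.

Lemma filterlim_C_iff {T} {F : (T -> Prop) -> Prop} {FF : Filter F} (k : T -> C) (l : C) :
  filterlim k F (locally l) <->
  filterlim (fun t => fst (k t)) F (locally (fst l)) /\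
  filterlim (fun t => snd (k t)) F (locally (snd l)).
Proof.
  rewrite !filterlim_locally. split.
  - intros H. split; intros eps; generalize (H eps); apply filter_imp; now intros t [H1 H2].
  - intros [H1 H2] eps. generalize (filter_and _ _ (H1 eps) (H2 eps)). apply filter_imp.
    now intros t [H3 H4].
Qed.

Lemma filterlim_Rplus {T} {F : (T -> Prop) -> Prop} {FF : Filter F} (u v : T -> R) a b :
  filterlim u F (locally a) -> filterlim v F (locally b) ->
  filterlim (fun t => u t + v t) F (locally (a + b)).
Proof. intros Hu Hv. exact (filterlim_comp_2 _ _ _ Hu Hv (@filterlim_plus _ R_NormedModule a b)). Qed.

Lemma filterlim_Rmult {T} {F : (T -> Prop) -> Prop} {FF : Filter F} (u v : T -> R) a b :
  filterlim u F (locally a) -> filterlim v F (locally b) ->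
  filterlim (fun t => u t * v t) F (locally (a * b)).
Proof. intros Hu Hv. exact (filterlim_comp_2 _ _ _ Hu Hv (@filterlim_mult R_AbsRing a b)). Qed.

Lemma filterlim_Rminus {T} {F : (T -> Prop) -> Prop} {FF : Filter F} (u v : T -> R) a b :
  filterlim u F (locally a) -> filterlim v F (locally b) ->
  filterlim (fun t => u t - v t) F (locally (a - b)).
Proof.
  intros Hu Hv. apply filterlim_Rplus; [exact Hu|].
  eapply filterlim_comp; [exact Hv | exact (@filterlim_opp _ R_NormedModule b)].
Qed.

Lemma filterlim_C_pair_components (y z : C) :
  filterlim (fun p : C * C => fst (fst p)) (filter_prod (locally y) (locally z)) (locally (fst y)) /\
  filterlim (fun p : C * C => snd (fst p)) (filter_prod (locally y) (locally z)) (locally (snd y)) /\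
  filterlim (fun p : C * C => fst (snd p)) (filter_prod (locally y) (locally z)) (locally (fst z)) /\
  filterlim (fun p : C * C => snd (snd p)) (filter_prod (locally y) (locally z)) (locally (snd z)).
Proof.
  assert (Hy : filterlim fst (filter_prod (locally y) (locally z)) (locally y))
    by now apply filterlim_fst.
  assert (Hz : filterlim snd (filter_prod (locally y) (locally z)) (locally z))
    by now apply filterlim_snd.
  apply filterlim_C_iff in Hy as [Hy1 Hy2]. apply filterlim_C_iff in Hz as [Hz1 Hz2]. auto.
Qed.

Lemma filterlim_Cmult (y z : C) :
  filterlim (fun p : C * C => (fst p * snd p)%C)
    (filter_prod (locally y) (locally z)) (locally (y * z)%C).
Proof.
  destruct (filterlim_C_pair_components y z) as (Hy1 & Hy2 & Hz1 & Hz2).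
  apply filterlim_C_iff; simpl; split.
  - apply filterlim_Rminus; now apply filterlim_Rmult.
  - apply filterlim_Rplus; now apply filterlim_Rmult.
Qed.

Lemma filterlim_Re_mult_sub (w y z : C) :
  filterlim (fun p : C * C => fst (w * (fst p - snd p))%C)
    (filter_prod (locally y) (locally z)) (locally (fst (w * (y - z))%C)).
Proof.
  destruct (filterlim_C_pair_components y z) as (Hy1 & Hy2 & Hz1 & Hz2). simpl.
  apply filterlim_Rminus; (apply filterlim_Rmult; [apply filterlim_const|]);
    (apply filterlim_Rplus;
      [|eapply filterlim_comp; [|apply (@filterlim_opp _ R_NormedModule)]]); eauto.
Qed.

Lemma continuous_Cmod (z : C) : continuous Cmod z.
Proof.
  apply (continuous_ext (@norm R_AbsRing C_R_NormedModule)); [intros; symmetry; apply Cmod_norm|].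
  apply filterlim_norm.
Qed.

Lemma RInt_Rmult_l (f : R -> R) c a b :
  ex_RInt f a b -> RInt (fun x => c * f x) a b = c * RInt f a b.
Proof. apply (@RInt_scal R_CompleteNormedModule). Qed.

Lemma RInt_Rplus (f g : R -> R) a b : ex_RInt f a b -> ex_RInt g a b ->
  RInt (fun x => f x + g x) a b = RInt f a b + RInt g a b.
Proof. apply (@RInt_plus R_CompleteNormedModule). Qed.

Lemma RInt_Rminus (f g : R -> R) a b : ex_RInt f a b -> ex_RInt g a b ->
  RInt (fun x => f x - g x) a b = RInt f a b - RInt g a b.
Proof. apply (@RInt_minus R_CompleteNormedModule). Qed.

Lemma RInt_subinterval_le (g : R -> R) a c d b :
  (forall x, 0 <= g x) -> (forall u v, ex_RInt g u v) ->
  a <= c -> c <= d -> d <= b -> RInt g c d <= RInt g a b.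
Proof.
  intros Hg Hi Hac Hcd Hdb.
  rewrite <- (RInt_Chasles g a c b), <- (RInt_Chasles g c d b) by auto.
  assert (0 <= RInt g a c) by (apply RInt_ge_0; auto).
  assert (0 <= RInt g d b) by (apply RInt_ge_0; auto).
  unfold plus; simpl. lra.
Qed.

Lemma RInt_weighted_deviation (u w : R -> R) l p q eps : p <= q ->
  (forall x, 0 <= w x) -> ex_RInt (fun x => u x * w x) p q -> ex_RInt w p q ->
  (forall x, p < x < q -> Rabs (u x - l) <= eps) ->
  Rabs (RInt (fun x => u x * w x) p q - l * RInt w p q) <= eps * RInt w p q.
Proof.
  intros Hpq Hw Huw Hwi Hu.
  assert (Hlw : ex_RInt (fun x => l * w x) p q) by now apply (@ex_RInt_scal R_NormedModule).
  rewrite <- !RInt_Rmult_l, <- RInt_Rminus by auto.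
  eapply Rle_trans; [apply abs_RInt_le; [exact Hpq | now apply (@ex_RInt_minus R_NormedModule)]|].
  apply RInt_le; [exact Hpq | | now apply (@ex_RInt_scal R_NormedModule) |].
  - apply (ex_RInt_norm (fun x => u x * w x - l * w x)). now apply (@ex_RInt_minus R_NormedModule).
  - intros x Hx. replace (u x * w x - l * w x) with ((u x - l) * w x) by ring.
    rewrite Rabs_mult, (Rabs_pos_eq (w x)) by auto. apply Rmult_le_compat_r; auto.
Qed.

(** * Piecewise regular functions *)

(* The [piecewise_continuous] of the statement for an arbitrary codomain, with one-sided limits
   required at every point (as for members of [PC_bj]). *)
Definition piecewise_regular {V : UniformSpace} (k : R -> V) : Prop :=
  (forall x, exists lp lm,
     filterlim k (at_right x) (locally lp) /\ filterlim k (at_left x) (locally lm)) /\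
  (forall a b, exists l : list R, forall x, a <= x <= b -> ~ In x l -> continuous k x).

Lemma continuous_at_left_right {V : UniformSpace} (k : R -> V) x :
  filterlim k (at_left x) (locally (k x)) -> filterlim k (at_right x) (locally (k x)) ->
  continuous k x.
Proof.
  intros Hl Hr. apply filterlim_locally. intros eps.
  apply filterlim_locally with (eps := eps) in Hl as [d1 H1].
  apply filterlim_locally with (eps := eps) in Hr as [d2 H2].
  exists (mkposreal _ (Rmin_pos _ _ (cond_pos d1) (cond_pos d2))). intros y Hy.
  destruct (Rtotal_order y x) as [Hyx | [-> | Hyx]].
  - apply H1; [|exact Hyx]. revert Hy. apply ball_le, Rmin_l.
  - apply ball_center.
  - apply H2; [|exact Hyx]. revert Hy. apply ball_le, Rmin_r.
Qed.

Section Integrability.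
Context {V : CompleteNormedModule R_AbsRing}.

Lemma ex_RInt_open_continuous (k : R -> V) a b la lb : a < b ->
  (forall x, a < x < b -> continuous k x) ->
  filterlim k (at_right a) (locally la) -> filterlim k (at_left b) (locally lb) ->
  ex_RInt k a b.
Proof.
  intros Hab Hk Ha Hb.
  set (g x := if Rle_dec x a then la else if Rle_dec b x then lb else k x).
  assert (Hin : forall x, a < x < b -> g x = k x).
  { intros x Hx. unfold g. destruct (Rle_dec x a); [lra|]. destruct (Rle_dec b x); [lra|]. easy. }
  assert (Hnear : forall x (P : R -> Prop), a < x < b -> 
    (forall y, a < y < b -> P y) -> locally x P).
  { intros x P Hx HP. assert (Hd : 0 < Rmin (x - a) (b - x)) by (apply Rmin_pos; lra).
    exists (mkposreal _ Hd).
    intros y Hy. apply HP. apply Rabs_lt_between' in Hy. simpl in Hy.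
    generalize (Rmin_l (x - a) (b - x)) (Rmin_r (x - a) (b - x)). lra. }
  apply ex_RInt_ext with g.
  { intros x Hx. rewrite Rmin_left, Rmax_right in Hx by lra. now apply Hin. }
  apply ex_RInt_continuous. intros z Hz. rewrite Rmin_left, Rmax_right in Hz by lra.
  destruct (Req_dec z a) as [-> | Hza]; [|destruct (Req_dec z b) as [-> | Hzb]].
  - assert (Hga : g a = la) by (unfold g; destruct (Rle_dec a a); [easy | lra]).
    apply continuous_at_left_right; rewrite Hga.
    + apply filterlim_ext_loc with (fun _ => la); [|apply filterlim_const].
      exists (mkposreal 1 Rlt_0_1). intros y _ Hy. unfold g. destruct (Rle_dec y a); [easy | lra].
    + apply filterlim_ext_loc with k; [|exact Ha].
      exists (mkposreal (b - a) ltac:(lra)). intros y Hy Hay. symmetry. apply Hin.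
      apply Rabs_lt_between' in Hy. simpl in Hy. lra.
  - assert (Hgb : g b = lb)
      by (unfold g; destruct (Rle_dec b a); [lra|]; destruct (Rle_dec b b); [easy | lra]).
    apply continuous_at_left_right; rewrite Hgb.
    + apply filterlim_ext_loc with k; [|exact Hb].
      exists (mkposreal (b - a) ltac:(lra)). intros y Hy Hyb. symmetry. apply Hin.
      apply Rabs_lt_between' in Hy. simpl in Hy. lra.
    + apply filterlim_ext_loc with (fun _ => lb); [|apply filterlim_const].
      exists (mkposreal 1 Rlt_0_1). intros y _ Hy. unfold g.
      destruct (Rle_dec y a); [lra|]. destruct (Rle_dec b y); [easy | lra].
  - apply continuous_ext_loc with k.
    + apply Hnear; [lra|]. intros y Hy. now rewrite Hin.
    + apply Hk. lra.
Qed.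

Lemma piecewise_regular_ex_RInt (k : R -> V) : piecewise_regular k -> forall a b, ex_RInt k a b.
Proof.
  intros [Hlim Hpc].
  assert (Hlist : forall l a b, a <= b ->
    (forall x, a < x < b -> ~ In x l -> continuous k x) -> ex_RInt k a b).
  { induction l as [|p l IH]; intros a b Hab Hc.
    - destruct (Req_dec a b) as [<- | Hne]; [apply ex_RInt_point|].
      destruct (Hlim a) as [la [_ [Ha _]]]. destruct (Hlim b) as [_ [lb [_ Hb]]].
      apply ex_RInt_open_continuous with la lb; [lra| |exact Ha|exact Hb].
      intros x Hx. now apply Hc.
    - assert (Hc' : forall c d, a <= c -> d <= b -> ~ (c < p < d) ->
                 forall x, c < x < d -> ~ In x l -> continuous k x).
      { intros c d Hc1 Hd1 Hp x Hx Hn. apply Hc; [lra|]. intros [-> | H]; [lra | easy]. }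
      destruct (Rlt_dec a p) as [Hap | Hap]; [destruct (Rlt_dec p b) as [Hpb | Hpb]|].
      + apply ex_RInt_Chasles with p; apply IH; try lra; apply Hc'; lra.
      + apply IH; [lra|]. apply Hc'; lra.
      + apply IH; [lra|]. apply Hc'; lra. }
  intros a b. destruct (Rle_dec a b) as [Hab | Hab].
  - destruct (Hpc a b) as [l Hl]. apply (Hlist l); [lra|]. intros x Hx. apply Hl. lra.
  - apply ex_RInt_swap. destruct (Hpc b a) as [l Hl]. apply (Hlist l); [lra|].
    intros x Hx. apply Hl. lra.
Qed.

End Integrability.

Lemma piecewise_regular_continuous {V : UniformSpace} (k : R -> V) :
  (forall x, continuous k x) -> piecewise_regular k.
Proof.
  intros Hk. split.
  - intros x. exists (k x), (k x).
    split; eapply filterlim_filter_le_1; try apply filter_le_within; apply Hk.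
  - intros a b. now exists nil.
Qed.

Lemma piecewise_regular_comp {U V : UniformSpace} (h : U -> V) (k : R -> U) :
  (forall y, continuous h y) -> piecewise_regular k -> piecewise_regular (fun x => h (k x)).
Proof.
  intros Hh [Hlim Hpc]. split.
  - intros x. destruct (Hlim x) as [lp [lm [Hp Hm]]]. exists (h lp), (h lm).
    split; eapply filterlim_comp; eauto; apply Hh.
  - intros a b. destruct (Hpc a b) as [l Hl]. exists l. intros x Hx Hn.
    apply continuous_comp; auto.
Qed.

Lemma piecewise_regular_comp2 {U V W : UniformSpace} (op : U -> V -> W) (k1 : R -> U) (k2 : R -> V) :
  (forall y z, filterlim (fun p => op (fst p) (snd p))
                 (filter_prod (locally y) (locally z)) (locally (op y z))) ->
  piecewise_regular k1 -> piecewise_regular k2 -> piecewise_regular (fun x => op (k1 x) (k2 x)).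
Proof.
  intros Hop [Hlim1 Hpc1] [Hlim2 Hpc2]. split.
  - intros x. destruct (Hlim1 x) as [p1 [m1 [Hp1 Hm1]]], (Hlim2 x) as [p2 [m2 [Hp2 Hm2]]].
    exists (op p1 p2), (op m1 m2). split; eapply filterlim_comp_2; eauto.
  - intros a b. destruct (Hpc1 a b) as [l1 Hl1], (Hpc2 a b) as [l2 Hl2].
    exists (l1 ++ l2). intros x Hx Hn. rewrite in_app_iff in Hn.
    eapply filterlim_comp_2; [apply Hl1 | apply Hl2 | apply Hop]; tauto.
Qed.

Lemma piecewise_regular_Rmult (k1 k2 : R -> R) :
  piecewise_regular k1 -> piecewise_regular k2 -> piecewise_regular (fun x => k1 x * k2 x).
Proof. apply piecewise_regular_comp2. intros y z. apply (@filterlim_mult R_AbsRing). Qed.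

Lemma piecewise_regular_Cmult (k1 k2 : R -> C) :
  piecewise_regular k1 -> piecewise_regular k2 -> piecewise_regular (fun x => (k1 x * k2 x)%C).
Proof. apply piecewise_regular_comp2, filterlim_Cmult. Qed.

Lemma piecewise_regular_Cmod (k : R -> C) :
  piecewise_regular k -> piecewise_regular (fun x => Cmod (k x)).
Proof. apply piecewise_regular_comp, continuous_Cmod. Qed.

Lemma SG_piecewise_regular (f : R -> C) : SG f -> piecewise_regular f.
Proof.
  intros [[Hpc Hlim] _]. split.
  - intros x. destruct (Hlim x) as [lp [lm [[Hp Hm] _]]]. now exists lp, lm.
  - intros a b. destruct (Hpc a b) as [l [Hl _]]. now exists l.
Qed.

Lemma piecewise_continuous_mult_continuous (f phi : R -> C) :
  piecewise_continuous f -> (forall x, continuous phi x) ->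
  piecewise_continuous (fun x => (f x * phi x)%C).
Proof.
  intros Hf Hphi a b. destruct (Hf a b) as [l [Hcont Hjump]]. exists l. split.
  - intros x Hx Hn. eapply filterlim_comp_2; [now apply Hcont | apply Hphi | apply filterlim_Cmult].
  - intros x Hx. destruct (Hjump x Hx) as [lp [lm [Hp Hm]]].
    exists (lp * phi x)%C, (lm * phi x)%C.
    split; (eapply filterlim_comp_2; [eassumption | |apply filterlim_Cmult]);
      eapply filterlim_filter_le_1; try apply filter_le_within; apply Hphi.
Qed.

(** * Improper integrals over the real line *)

Lemma RInt_tails_small (g : R -> R) B :
  (forall x, 0 <= g x) -> (forall u v, ex_RInt g u v) ->
  (forall r, 0 <= r -> RInt g (-r) r <= B) ->
  forall eps : posreal, exists M, 0 <= M /\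
    forall a b, a <= -M -> M <= b -> RInt g a (-M) + RInt g M b < eps.
Proof.
  intros Hg Hi HB eps.
  set (E y := exists r, 0 <= r /\ y = RInt g (-r) r).
  destruct (completeness E) as [S [HS HSmin]].
  { exists B. intros y [r [Hr ->]]. now apply HB. }
  { exists (RInt g (-0) 0), 0. split; [lra | easy]. }
  assert (Hle : forall a b, a <= b -> RInt g a b <= S).
  { intros a b Hab. set (r := Rmax (Rabs a) (Rabs b)).
    assert (Ha : Rabs a <= r) by apply Rmax_l. assert (Hb : Rabs b <= r) by apply Rmax_r.
    apply Rabs_le_between in Ha, Hb.
    apply Rle_trans with (RInt g (-r) r); [apply RInt_subinterval_le; auto; lra|].
    apply HS. exists r. split; [lra | easy]. }
  assert (HM : exists M, 0 <= M /\ S - eps < RInt g (-M) M).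
  { apply NNPP. intros Hno. assert (S <= S - eps); [|destruct eps; simpl in *; lra].
    apply HSmin. intros y [r [Hr ->]]. apply Rnot_lt_le. intros Hlt. apply Hno. now exists r. }
  destruct HM as [M [HM0 HM]]. exists M. split; [exact HM0|]. intros a b Ha Hb.
  assert (Hab := Hle a b ltac:(lra)).
  rewrite <- (RInt_Chasles g a (-M) b), <- (RInt_Chasles g (-M) M b) in Hab by auto.
  unfold plus in Hab; simpl in Hab. lra.
Qed.

Lemma minus_plus_middle {V : NormedModule R_AbsRing} (p x q : V) :
  minus (plus p (plus x q)) x = plus p q.
Proof.
  unfold minus. rewrite (plus_comm x q), plus_assoc, <- plus_assoc.
  etransitivity; [apply f_equal, plus_opp_r | apply plus_zero_r].
Qed.

Lemma ex_RInt_gen_of_bounded_norm {V : CompleteNormedModule R_AbsRing} (k : R -> V) B :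
  (forall a b, ex_RInt k a b) -> (forall a b, ex_RInt (fun x => norm (k x)) a b) ->
  (forall r, 0 <= r -> RInt (fun x => norm (k x)) (-r) r <= B) ->
  ex_RInt_gen k (Rbar_locally m_infty) (Rbar_locally p_infty).
Proof.
  intros Hk Hn HB.
  set (F := filtermap (fun ab => RInt k (fst ab) (snd ab))
               (filter_prod (Rbar_locally m_infty) (Rbar_locally p_infty))).
  assert (HF : ProperFilter F).
  { apply filtermap_proper_filter, filter_prod_proper; apply Rbar_locally_filter. }
  assert (Hcauchy : cauchy F).
  { intros eps.
    destruct (RInt_tails_small _ B (fun x => norm_ge_0 (k x)) Hn HB eps) as [M [HM0 HM]].
    exists (RInt k (-M) M).
    exists (fun a => a < -M) (fun b => M < b); [now exists (-M) | now exists M|].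
    intros a b Ha Hb. simpl. apply (@norm_compat1 R_AbsRing V).
    rewrite <- (RInt_Chasles k a (-M) b), <- (RInt_Chasles k (-M) M b) by auto.
    rewrite (minus_plus_middle (V := CompleteNormedModule.NormedModule R_AbsRing V)).
    eapply Rle_lt_trans; [apply norm_triangle|].
    eapply Rle_lt_trans; [|apply (HM a b); lra].
    assert (Hnorm : forall u v, u <= v -> norm (RInt k u v) <= RInt (fun x => norm (k x)) u v).
    { intros u v Huv. apply (norm_RInt_le k (fun x => norm (k x)) u v); [lra | intros; apply Rle_refl
      | apply RInt_correct; auto | apply (@RInt_correct R_CompleteNormedModule); auto]. }
    apply Rplus_le_compat; apply Hnorm; lra. }
  exists (lim F). intros P [eps HP]. unfold filtermapi.
  generalize (complete_cauchy F HF Hcauchy eps). unfold F, filtermap. apply filter_imp.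
  intros [a b] Hab. exists (RInt k a b). split; [apply RInt_correct; auto | now apply HP].
Qed.

Lemma RInt_symmetric_cvg {V : CompleteNormedModule R_AbsRing} (k : R -> V) L :
  is_RInt_gen k (Rbar_locally m_infty) (Rbar_locally p_infty) L ->
  filterlim (fun r => RInt k (-r) r) (Rbar_locally p_infty) (locally L).
Proof.
  intros H P HP. destruct (H P HP) as [Q S [M1 HQ] [M2 HS] Hall].
  exists (Rmax (- M1) M2). intros r Hr.
  destruct (Hall (-r) r) as [y [Hy HPy]].
  - apply HQ. generalize (Rmax_l (- M1) M2). lra.
  - apply HS. generalize (Rmax_r (- M1) M2). lra.
  - simpl in Hy. now rewrite (is_RInt_unique _ _ _ _ Hy).
Qed.

Lemma is_RInt_gen_fst (k : R -> C) F G (L : C) :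
  is_RInt_gen k F G L -> is_RInt_gen (fun x => fst (k x)) F G (fst L).
Proof.
  intros H P [eps HP].
  destruct (H (fun z => P (fst z))) as [Q S HQ HS Hall].
  { exists eps. intros z [Hz _]. now apply HP. }
  exists Q S; [exact HQ | exact HS|]. intros p q Hp Hq.
  destruct (Hall p q Hp Hq) as [y [Hy HPy]]. exists (fst y).
  split; [now apply is_RInt_fct_extend_fst | exact HPy].
Qed.

Lemma smooth_decay_continuous (u : R -> R) : smooth_decay u -> forall x, continuous u x.
Proof. intros [Hd _] x. apply (ex_derive_continuous u), (Hd 0%nat x). Qed.

Lemma Schwartz_continuous (phi : R -> C) : Schwartz phi -> forall x, continuous phi x.
Proof.
  intros [Hre Him] x. apply filterlim_C_iff.
  split; [apply (smooth_decay_continuous _ Hre) | apply (smooth_decay_continuous _ Him)].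
Qed.

Lemma Rabs_le_1_near_infinity (h : R -> R) :
  is_lim h p_infty 0 -> is_lim h m_infty 0 ->
  exists X, 1 <= X /\ forall x, X <= Rabs x -> Rabs (h x) <= 1.
Proof.
  intros Hp Hm. apply is_lim_spec in Hp, Hm.
  destruct (Hp (mkposreal 1 Rlt_0_1)) as [M1 HM1], (Hm (mkposreal 1 Rlt_0_1)) as [M2 HM2].
  simpl in HM1, HM2.
  exists (Rmax 1 (Rmax (M1 + 1) (- M2 + 1))). split; [apply Rmax_l|]. intros x Hx.
  generalize (Rmax_r 1 (Rmax (M1 + 1) (- M2 + 1))) (Rmax_l (M1 + 1) (- M2 + 1))
    (Rmax_r (M1 + 1) (- M2 + 1)) (Rmax_l 1 (Rmax (M1 + 1) (- M2 + 1))).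
  intros. destruct (Rle_dec 0 x).
  - rewrite Rabs_right in Hx by lra. specialize (HM1 x ltac:(lra)). rewrite Rminus_0_r in HM1. lra.
  - rewrite Rabs_left in Hx by lra. specialize (HM2 x ltac:(lra)). rewrite Rminus_0_r in HM2. lra.
Qed.

Lemma smooth_decay_weighted_bound (u : R -> R) m : smooth_decay u ->
  exists D, forall x, Rabs (u x) * (1 + Rabs x) ^ m <= D.
Proof.
  intros Hu. destruct (proj2 Hu m 0%nat) as [Hp Hm].
  destruct (Rabs_le_1_near_infinity _ Hp Hm) as [X [HX HXb]].
  destruct (continuity_ab_maj (fun y => Rabs (u y)) (-X) X) as [x1 [Hx1 _]].
  { lra. }
  { intros y _. apply continuity_pt_filterlim.
    apply (continuous_comp u Rabs); [apply (smooth_decay_continuous _ Hu) | apply continuous_Rabs]. }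
  exists (Rmax (2 ^ m) (Rabs (u x1) * (1 + X) ^ m)). intros x.
  assert (Hx0 := Rabs_pos x). assert (Hux := Rabs_pos (u x)).
  destruct (Rle_dec (Rabs x) X) as [Hx | Hx].
  - eapply Rle_trans; [|apply Rmax_r]. apply Rmult_le_compat; try lra.
    + apply pow_le. lra.
    + apply Hx1. now apply Rabs_le_between.
    + apply pow_incr. lra.
  - eapply Rle_trans; [|apply Rmax_l].
    specialize (HXb x ltac:(lra)). simpl in HXb. rewrite Rabs_mult, <- RPow_abs in HXb.
    assert ((1 + Rabs x) ^ m <= 2 ^ m * Rabs x ^ m).
    { rewrite <- Rpow_mult_distr. apply pow_incr. lra. }
    assert (0 <= Rabs x ^ m) by now apply pow_le.
    assert (0 <= 2 ^ m) by (apply pow_le; lra).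
    nra.
Qed.

Lemma Cmod_le_Rabs_sum (z : C) : Cmod z <= Rabs (fst z) + Rabs (snd z).
Proof.
  assert (H0 := Rabs_pos (fst z)). assert (H1 := Rabs_pos (snd z)).
  unfold Cmod. rewrite <- (sqrt_Rsqr (Rabs (fst z) + Rabs (snd z))) by lra.
  apply sqrt_le_1_alt. unfold Rsqr. rewrite <- (pow2_abs (fst z)), <- (pow2_abs (snd z)). nra.
Qed.

Lemma Schwartz_weighted_bound (phi : R -> C) m : Schwartz phi ->
  exists D, forall x, Cmod (phi x) * (1 + Rabs x) ^ m <= D.
Proof.
  intros [Hre Him].
  destruct (smooth_decay_weighted_bound _ m Hre) as [D1 HD1].
  destruct (smooth_decay_weighted_bound _ m Him) as [D2 HD2].
  exists (D1 + D2). intros x. specialize (HD1 x). specialize (HD2 x).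
  assert (0 <= (1 + Rabs x) ^ m) by (apply pow_le; generalize (Rabs_pos x); lra).
  assert (Hz := Cmod_le_Rabs_sum (phi x)). unfold Re, Im in *. nra.
Qed.

Lemma lim_zero_of_weighted_bound (h : R -> R) A :
  (forall x, Rabs (h x) * (1 + Rabs x) <= A) -> is_lim h p_infty 0 /\ is_lim h m_infty 0.
Proof.
  intros HA.
  assert (Hsmall : forall eps : posreal, forall x, Rabs A / eps < Rabs x -> Rabs (h x - 0) < eps).
  { intros eps x Hx. rewrite Rminus_0_r.
    assert (He := cond_pos eps). assert (HAe : Rabs A / eps * eps = Rabs A) by (field; lra).
    assert (HAx : Rabs A < eps * Rabs x).
    { rewrite <- HAe, (Rmult_comm eps). apply Rmult_lt_compat_r; lra. }
    generalize (HA x) (Rle_abs A) (Rabs_pos (h x)) (Rabs_pos x). nra. }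
  split; apply is_lim_spec; intros eps;
    assert (0 <= Rabs A / eps) by (apply Rdiv_le_0_compat; [apply Rabs_pos | apply cond_pos]).
  - exists (Rabs A / eps). intros x Hx. apply Hsmall. rewrite (Rabs_right x); lra.
  - exists (- (Rabs A / eps)). intros x Hx. apply Hsmall. rewrite (Rabs_left x); lra.
Qed.

Lemma smooth_decay_scal (u v : R -> R) a :
  (forall x, v x = a * u x) -> smooth_decay u -> smooth_decay v.
Proof.
  intros Hv [Hd Hlim].
  assert (HD : forall n x, Derive_n v n x = a * Derive_n u n x).
  { intros n x. rewrite (Derive_n_ext v (fun y => a * u y)) by auto. apply Derive_n_scal_l. }
  split.
  - intros n x. apply (ex_derive_ext (fun y => a * Derive_n u n y)); [intros; symmetry; apply HD|].
    apply ex_derive_scal, Hd.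
  - intros m n. destruct (Hlim m n) as [Hp Hm].
    split; (apply (is_lim_ext (fun y => a * (y ^ m * Derive_n u n y))); [intros y; rewrite HD; ring|]);
      replace (Finite 0) with (Rbar_mult a 0) by (simpl; now rewrite Rmult_0_r);
      now apply is_lim_scal_l.
Qed.

(** * Products of tempered and Schwartz functions *)

Lemma shell_weight_le y N D K : 1 <= y -> 0 <= D -> 0 <= K ->
  D / y ^ (N + 2) * (K * (1 + y) ^ N) <= 2 ^ S N * D * K * (1 / y - 1 / (y + 1)).
Proof.
  intros Hy HD HK.
  assert (Hp : (1 + y) ^ N <= 2 ^ N * y ^ N) by (rewrite <- Rpow_mult_distr; apply pow_incr; lra).
  assert (HyN : 0 < y ^ N) by (apply pow_lt; lra).
  assert (H2N : 0 < 2 ^ N) by (apply pow_lt; lra).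
  replace (D / y ^ (N + 2) * (K * (1 + y) ^ N)) with (D * K / (y * y) * ((1 + y) ^ N / y ^ N))
    by (rewrite pow_add; simpl; field; lra).
  replace (2 ^ S N * D * K * (1 / y - 1 / (y + 1)))
    with (D * K / (y * y) * (2 ^ N * (2 * y / (y + 1))))
    by (simpl; field; lra).
  apply Rmult_le_compat_l; [apply Rdiv_le_0_compat; nra|].
  apply Rle_trans with (2 ^ N); [apply Rle_div_l; lra|].
  rewrite <- (Rmult_1_r (2 ^ N)) at 1. apply Rmult_le_compat_l; [lra|].
  apply Rle_div_r; lra.
Qed.

Lemma RInt_shell_le (F w : R -> R) r c : 0 <= r ->
  (forall a b, ex_RInt F a b) -> (forall a b, ex_RInt (fun x => F x * w x) a b) ->
  (forall x, 0 <= F x) -> (forall x, r <= Rabs x -> w x <= c) ->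
  RInt (fun x => F x * w x) (-(r + 1)) (r + 1) - RInt (fun x => F x * w x) (-r) r
    <= c * (RInt F (-(r + 1)) (r + 1) - RInt F (-r) r).
Proof.
  intros Hr HF HFw HF0 Hw.
  assert (Hpiece : forall a, (forall x, a <= x <= a + 1 -> r <= Rabs x) ->
    RInt (fun x => F x * w x) a (a + 1) <= c * RInt F a (a + 1)).
  { intros a Ha. rewrite <- RInt_Rmult_l by auto.
    apply RInt_le; [lra | auto | apply (@ex_RInt_scal R_NormedModule); auto |].
    intros x Hx. rewrite Rmult_comm. apply Rmult_le_compat_r; [auto | apply Hw, Ha; lra]. }
  assert (Hl := Hpiece (-(r + 1)) ltac:(intros x Hx; rewrite Rabs_left1; lra)).
  assert (Hr' := Hpiece r ltac:(intros x Hx; rewrite Rabs_right; lra)).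
  replace (-(r + 1) + 1) with (-r) in Hl by ring.
  rewrite <- (RInt_Chasles (fun x => F x * w x) (-(r + 1)) (-r) (r + 1)),
    <- (RInt_Chasles (fun x => F x * w x) (-r) r (r + 1)) by auto.
  rewrite <- (RInt_Chasles F (-(r + 1)) (-r) (r + 1)), <- (RInt_Chasles F (-r) r (r + 1)) by auto.
  unfold plus; simpl. lra.
Qed.

Lemma RInt_weighted_bound (F w : R -> R) K N D :
  (forall a b, ex_RInt F a b) -> (forall a b, ex_RInt (fun x => F x * w x) a b) ->
  (forall x, 0 <= F x) -> (forall x, 0 <= w x) -> 0 <= K ->
  (forall r, 0 < r -> RInt F (-r) r <= K * (1 + r) ^ N) ->
  (forall x, w x * (1 + Rabs x) ^ (N + 2) <= D) ->
  forall r, 0 <= r -> RInt (fun x => F x * w x) (-r) r <= 2 ^ S N * D * K.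
Proof.
  intros HF HFw HF0 Hw0 HK HFgrowth Hwdecay.
  assert (HFw0 : forall x, 0 <= F x * w x) by (intros; apply Rmult_le_pos; auto).
  assert (HD : 0 <= D).
  { apply Rle_trans with (w 0 * (1 + Rabs 0) ^ (N + 2)); [|apply Hwdecay].
    apply Rmult_le_pos; [apply Hw0 | apply pow_le; generalize (Rabs_pos 0); lra]. }
  assert (Hw : forall r, 0 <= r -> forall x, r <= Rabs x -> w x <= D / (1 + r) ^ (N + 2)).
  { intros r Hr x Hx. apply Rle_div_r; [apply pow_lt; lra|]. eapply Rle_trans; [|apply Hwdecay].
    apply Rmult_le_compat_l; [apply Hw0 | apply pow_incr; lra]. }
  set (C0 := 2 ^ S N * D * K).
  (* the shell [n <= |x| <= n + 1] contributes at most [C0 (1/(n+1) - 1/(n+2))], which telescopes *)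
  assert (Hnat : forall n : nat,
    RInt (fun x => F x * w x) (- INR n) (INR n) <= C0 * (1 - 1 / (INR n + 1))).
  { induction n as [|n IH].
    - simpl. rewrite Ropp_0, RInt_point. unfold zero; simpl. lra.
    - rewrite S_INR. assert (Hn := pos_INR n).
      set (c := D / (1 + INR n) ^ (N + 2)).
      assert (Hsh := RInt_shell_le F w (INR n) c Hn HF HFw HF0 (Hw (INR n) Hn)).
      assert (HF1 := HFgrowth (INR n + 1) ltac:(lra)).
      assert (HFn : 0 <= RInt F (- INR n) (INR n)) by (apply RInt_ge_0; auto; lra).
      assert (Hc : 0 <= c) by (apply Rdiv_le_0_compat; [exact HD | apply pow_lt; lra]).
      assert (Hstep : c * (K * (1 + (1 + INR n)) ^ N) <= C0 * (1 / (INR n + 1) - 1 / (INR n + 1 + 1))).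
      { unfold c. replace (INR n + 1) with (1 + INR n) by ring. apply shell_weight_le; lra. }
      replace (1 + (INR n + 1)) with (1 + (1 + INR n)) in HF1 by ring.
      assert (c * (RInt F (- (INR n + 1)) (INR n + 1) - RInt F (- INR n) (INR n))
              <= c * (K * (1 + (1 + INR n)) ^ N)) by (apply Rmult_le_compat_l; lra).
      lra. }
  intros r Hr. destruct (nfloor_ex r Hr) as [n Hn].
  apply Rle_trans with (RInt (fun x => F x * w x) (- INR (S n)) (INR (S n))).
  { rewrite S_INR. apply RInt_subinterval_le; auto; lra. }
  eapply Rle_trans; [apply Hnat|].
  assert (0 < 1 / (INR (S n) + 1)) by (apply Rdiv_lt_0_compat; generalize (pos_INR (S n)); lra).
  assert (0 <= C0) by (unfold C0; apply Rmult_le_pos; [apply Rmult_le_pos|]; auto; apply pow_le; lra).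
  nra.
Qed.

Section SG_times_Schwartz.
Variables (f phi : R -> C).
Hypotheses (Hf : SG f) (Hphi : Schwartz phi).

Lemma SG_mult_Schwartz_regular : piecewise_regular (fun x => (f x * phi x)%C).
Proof.
  apply piecewise_regular_Cmult; [now apply SG_piecewise_regular|].
  now apply piecewise_regular_continuous, Schwartz_continuous.
Qed.

Lemma SG_mult_Schwartz_bound :
  exists B, forall r, 0 <= r -> RInt (fun x => Cmod (f x * phi x)) (-r) r <= B.
Proof.
  destruct Hf as [Hpc [K [N [HK Hgrowth]]]].
  destruct (Schwartz_weighted_bound phi (N + 2) Hphi) as [D HD].
  exists (2 ^ S N * D * K). intros r Hr.
  rewrite (RInt_ext _ (fun x => Cmod (f x) * Cmod (phi x))) by (intros; apply Cmod_mult).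
  apply RInt_weighted_bound; auto using Cmod_ge_0; try lra.
  - apply (@piecewise_regular_ex_RInt R_CompleteNormedModule), piecewise_regular_Cmod.
    now apply SG_piecewise_regular.
  - intros a b. apply (ex_RInt_ext (fun x => Cmod (f x * phi x))); [intros; apply Cmod_mult|].
    apply (@piecewise_regular_ex_RInt R_CompleteNormedModule), piecewise_regular_Cmod.
    apply SG_mult_Schwartz_regular.
Qed.

Lemma SG_mult_Schwartz_is_RInt_gen :
  is_RInt_gen (fun x => (f x * phi x)%C) (Rbar_locally m_infty) (Rbar_locally p_infty)
    (int_R (fun x => (f x * phi x)%C)).
Proof.
  apply (@RInt_gen_correct C_R_CompleteNormedModule); try exact _.
  destruct SG_mult_Schwartz_bound as [B HB].
  apply (ex_RInt_gen_of_bounded_norm _ B).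
  - apply (@piecewise_regular_ex_RInt C_R_CompleteNormedModule), SG_mult_Schwartz_regular.
  - intros a b. apply (ex_RInt_ext (fun x => Cmod (f x * phi x))); [intros; apply Cmod_norm|].
    apply (@piecewise_regular_ex_RInt R_CompleteNormedModule), piecewise_regular_Cmod.
    apply SG_mult_Schwartz_regular.
  - intros r Hr. rewrite <- (RInt_ext (fun x => Cmod (f x * phi x))) by (intros; apply Cmod_norm).
    auto.
Qed.

Lemma SG_mult_Schwartz_abs_integrable : abs_integrable (fun x => (f x * phi x)%C).
Proof.
  destruct SG_mult_Schwartz_bound as [B HB].
  assert (Hnorm : forall x, norm (Cmod (f x * phi x)) = Cmod (f x * phi x))
    by (intros; apply Rabs_pos_eq, Cmod_ge_0).
  apply (@ex_RInt_gen_of_bounded_norm R_CompleteNormedModule _ B).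
  - apply (@piecewise_regular_ex_RInt R_CompleteNormedModule), piecewise_regular_Cmod.
    apply SG_mult_Schwartz_regular.
  - intros a b. apply (ex_RInt_ext (fun x => Cmod (f x * phi x))); [intros; now rewrite Hnorm|].
    apply (@piecewise_regular_ex_RInt R_CompleteNormedModule), piecewise_regular_Cmod.
    apply SG_mult_Schwartz_regular.
  - intros r Hr. rewrite (RInt_ext _ (fun x => Cmod (f x * phi x))) by (intros; apply Hnorm).
    auto.
Qed.

End SG_times_Schwartz.

(** * Gaussians *)

Inductive polynomial : (R -> R) -> Prop :=
  | polynomial_const c : polynomial (fun _ => c)
  | polynomial_id : polynomial (fun x => x)
  | polynomial_plus p q : polynomial p -> polynomial q -> polynomial (fun x => p x + q x)
  | polynomial_mult p q : polynomial p -> polynomial q -> polynomial (fun x => p x * q x).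

Lemma polynomial_derive p : polynomial p ->
  exists q, polynomial q /\ forall x, is_derive p x (q x).
Proof.
  induction 1 as [c | | p q _ [p' [Hp' Dp]] _ [q' [Hq' Dq]] | p q Hp [p' [Hp' Dp]] Hq [q' [Hq' Dq]]].
  - exists (fun _ => 0). split; [constructor|]. intros x. apply (@is_derive_const R_AbsRing).
  - exists (fun _ => 1). split; [constructor|]. intros x. apply (@is_derive_id R_AbsRing).
  - exists (fun x => p' x + q' x). split; [now constructor|].
    intros x. exact (@is_derive_plus R_AbsRing R_NormedModule _ _ _ _ _ (Dp x) (Dq x)).
  - exists (fun x => p' x * q x + p x * q' x). split; [repeat constructor; auto|].
    intros x. exact (@is_derive_mult R_AbsRing _ _ _ _ _ (Dp x) (Dq x) Rmult_comm).
Qed.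

Lemma polynomial_growth p : polynomial p ->
  exists C n, 0 <= C /\ forall x, Rabs (p x) <= C * (1 + Rabs x) ^ n.
Proof.
  induction 1 as [c | | p q _ [C1 [n1 [HC1 H1]]] _ [C2 [n2 [HC2 H2]]]
                 | p q _ [C1 [n1 [HC1 H1]]] _ [C2 [n2 [HC2 H2]]]].
  - exists (Rabs c), 0%nat. split; [apply Rabs_pos|]. intros x. simpl. lra.
  - exists 1, 1%nat. split; [lra|]. intros x. simpl. lra.
  - exists (C1 + C2), (n1 + n2)%nat. split; [lra|]. intros x.
    assert (Hx : 1 <= 1 + Rabs x) by (generalize (Rabs_pos x); lra).
    assert (E1 := Rle_pow _ n1 (n1 + n2) Hx ltac:(lia)).
    assert (E2 := Rle_pow _ n2 (n1 + n2) Hx ltac:(lia)).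
    eapply Rle_trans; [apply Rabs_triang|].
    generalize (H1 x) (H2 x). nra.
  - exists (C1 * C2), (n1 + n2)%nat. split; [nra|]. intros x.
    rewrite Rabs_mult, pow_add.
    replace (C1 * C2 * ((1 + Rabs x) ^ n1 * (1 + Rabs x) ^ n2))
      with (C1 * (1 + Rabs x) ^ n1 * (C2 * (1 + Rabs x) ^ n2)) by ring.
    apply Rmult_le_compat; auto using Rabs_pos.
Qed.

Definition gauss (c x0 x : R) : R := exp (- (c * (x - x0) ^ 2)).

Lemma gauss_pos c x0 x : 0 < gauss c x0 x.
Proof. apply exp_pos. Qed.

Lemma gauss_derive c x0 x : is_derive (gauss c x0) x (-2 * c * (x - x0) * gauss c x0 x).
Proof. unfold gauss. auto_derive; [easy | unfold Rminus; simpl; ring]. Qed.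

Lemma gauss_continuous c x0 x : continuous (gauss c x0) x.
Proof. apply (ex_derive_continuous (gauss c x0)). eexists. apply gauss_derive. Qed.

Lemma Derive_n_gauss c x0 n : exists p, polynomial p /\
  forall x, Derive_n (gauss c x0) n x = p x * gauss c x0 x.
Proof.
  induction n as [|n [p [Hp IH]]].
  - exists (fun _ => 1). split; [constructor|]. intros x. simpl. ring.
  - destruct (polynomial_derive p Hp) as [q [Hq Dp]].
    exists (fun x => q x + p x * (-2 * c * (x + - x0))). split; [repeat constructor; auto|].
    intros x. simpl. rewrite (Derive_ext _ _ x IH). apply is_derive_unique.
    eapply is_derive_ext; [intros; reflexivity|].
    replace ((q x + p x * (-2 * c * (x + - x0))) * gauss c x0 x)
      with (plus (mult (q x) (gauss c x0 x)) (mult (p x) (-2 * c * (x - x0) * gauss c x0 x)))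
      by (unfold plus, mult; simpl; ring).
    exact (@is_derive_mult R_AbsRing _ _ _ _ _ (Dp x) (gauss_derive c x0 x) Rmult_comm).
Qed.

Lemma pow_le_exp y n : 0 <= y -> (y / INR (S n)) ^ S n <= exp y.
Proof.
  intros Hy. assert (HK : 0 < INR (S n)) by apply lt_0_INR, Nat.lt_0_succ.
  assert (Hexp : forall (m : nat) z, exp (INR m * z) = exp z ^ m).
  { induction m as [|m IH]; intros z; simpl pow.
    - rewrite Rmult_0_l. apply exp_0.
    - rewrite S_INR, Rmult_plus_distr_r, Rmult_1_l, exp_plus, IH. ring. }
  replace y with (INR (S n) * (y / INR (S n))) at 2 by (field; lra).
  rewrite Hexp. apply pow_incr. split; [apply Rdiv_le_0_compat; lra|].
  generalize (exp_ineq1_le (y / INR (S n))). lra.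
Qed.

Lemma gauss_weighted_bound c x0 k : 0 < c ->
  exists A, forall x, (1 + Rabs x) ^ k * gauss c x0 x <= A.
Proof.
  intros Hc. set (K := INR (S k)). assert (HK : 0 < K) by apply lt_0_INR, Nat.lt_0_succ.
  exists ((1 + Rabs x0) ^ k * ((K / c) ^ S k * exp (2 * c))). intros x.
  set (t := x - x0). assert (Ht := pow2_ge_0 t).
  assert (Hx : 1 + Rabs x <= (1 + Rabs x0) * (2 + t ^ 2)).
  { assert (Rabs x <= Rabs x0 + Rabs t) by (unfold t; generalize (Rabs_triang_inv x x0); lra).
    assert (Rabs t <= 1 + t ^ 2) by (rewrite <- (pow2_abs t); generalize (Rabs_pos t); nra).
    generalize (Rabs_pos x0) (Rabs_pos t). nra. }
  assert (Hexp := pow_le_exp (c * (2 + t ^ 2)) k ltac:(nra)). fold K in Hexp.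
  assert (Hg : (2 + t ^ 2) ^ S k * gauss c x0 x <= (K / c) ^ S k * exp (2 * c)).
  { unfold gauss. fold t. rewrite exp_Ropp.
    replace (c * (2 + t ^ 2) / K) with (c / K * (2 + t ^ 2)) in Hexp by (field; lra).
    replace (c * (2 + t ^ 2)) with (2 * c + c * t ^ 2) in Hexp by ring.
    rewrite Rpow_mult_distr, exp_plus in Hexp.
    assert (HPQ : (c / K) ^ S k * (K / c) ^ S k = 1)
      by (rewrite <- Rpow_mult_distr; replace (c / K * (K / c)) with 1 by (field; lra); apply pow1).
    assert (0 < (K / c) ^ S k) by (apply pow_lt, Rdiv_lt_0_compat; lra).
    assert (HE := exp_pos (c * t ^ 2)).
    apply Rle_div_l; [exact HE|].
    apply Rle_trans with ((K / c) ^ S k * ((c / K) ^ S k * (2 + t ^ 2) ^ S k)).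
    - rewrite <- Rmult_assoc, (Rmult_comm ((K / c) ^ S k)), HPQ. lra.
    - rewrite Rmult_assoc. apply Rmult_le_compat_l; lra. }
  apply Rle_trans with (((1 + Rabs x0) * (2 + t ^ 2)) ^ k * gauss c x0 x).
  { apply Rmult_le_compat_r; [apply Rlt_le, gauss_pos|]. apply pow_incr. generalize (Rabs_pos x); lra. }
  rewrite Rpow_mult_distr, Rmult_assoc.
  apply Rmult_le_compat_l; [apply pow_le; generalize (Rabs_pos x0); lra|].
  eapply Rle_trans; [|exact Hg].
  apply Rmult_le_compat_r; [apply Rlt_le, gauss_pos|]. apply Rle_pow; [lra | lia].
Qed.

Lemma gauss_smooth_decay c x0 : 0 < c -> smooth_decay (gauss c x0).
Proof.
  intros Hc. split.
  - intros n x. destruct (Derive_n_gauss c x0 n) as [p [Hp HD]].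
    destruct (polynomial_derive p Hp) as [q [_ Dp]].
    apply (ex_derive_ext (fun y => p y * gauss c x0 y)); [intros; symmetry; apply HD|].
    eexists. exact (@is_derive_mult R_AbsRing _ _ _ _ _ (Dp x) (gauss_derive c x0 x) Rmult_comm).
  - intros m n. destruct (Derive_n_gauss c x0 n) as [p [Hp HD]].
    destruct (polynomial_growth p Hp) as [C [k [HC Hgrowth]]].
    destruct (gauss_weighted_bound c x0 (m + k + 1) Hc) as [A HA].
    apply lim_zero_of_weighted_bound with (C * A). intros x.
    rewrite HD, !Rabs_mult, (Rabs_pos_eq (gauss c x0 x)), <- RPow_abs by apply Rlt_le, gauss_pos.
    assert (Hx := Rabs_pos x). assert (Hg := gauss_pos c x0 x).
    assert (Hm : Rabs x ^ m <= (1 + Rabs x) ^ m) by (apply pow_incr; lra).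
    assert (Hk := Hgrowth x).
    assert (HA' := HA x). rewrite !pow_add, pow_1 in HA'.
    assert (0 <= Rabs x ^ m) by now apply pow_le.
    assert (0 <= (1 + Rabs x) ^ k) by (apply pow_le; lra).
    assert (0 <= (1 + Rabs x) ^ m) by (apply pow_le; lra).
    apply Rle_trans with (C * ((1 + Rabs x) ^ m * (1 + Rabs x) ^ k * (1 + Rabs x) * gauss c x0 x)).
    + replace (C * _) with ((1 + Rabs x) ^ m * (C * (1 + Rabs x) ^ k) * ((1 + Rabs x) * gauss c x0 x))
        by ring.
      replace (Rabs x ^ m * _ * _) with (Rabs x ^ m * Rabs (p x) * ((1 + Rabs x) * gauss c x0 x))
        by ring.
      apply Rmult_le_compat_r; [nra|]. apply Rmult_le_compat; auto using Rabs_pos.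
    + apply Rmult_le_compat_l; lra.
Qed.

Definition gauss_test (w : C) (c x0 x : R) : C := (w * RtoC (gauss c x0 x))%C.

Lemma gauss_test_Schwartz w c x0 : 0 < c -> Schwartz (gauss_test w c x0).
Proof.
  intros Hc. split; [apply (smooth_decay_scal (gauss c x0) _ (fst w))
                    | apply (smooth_decay_scal (gauss c x0) _ (snd w))];
    try (intros x; unfold gauss_test; simpl; ring); now apply gauss_smooth_decay.
Qed.

Lemma gauss_piecewise_regular c x0 : piecewise_regular (gauss c x0).
Proof. apply piecewise_regular_continuous, gauss_continuous. Qed.

Lemma gauss_ex_RInt c x0 p q : ex_RInt (gauss c x0) p q.
Proof. apply (@piecewise_regular_ex_RInt R_CompleteNormedModule), gauss_piecewise_regular. Qed.

Lemma exp_le_compat x y : x <= y -> exp x <= exp y.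
Proof. intros [H | ->]; [now apply Rlt_le, exp_increasing | apply Rle_refl]. Qed.

Lemma RInt_gauss_reflect c x0 d :
  RInt (gauss c x0) (x0 - d) x0 = RInt (gauss c x0) x0 (x0 + d).
Proof.
  assert (Hi := gauss_ex_RInt c x0).
  assert (E := RInt_comp_lin (V := R_CompleteNormedModule) (gauss c x0) (-1) (2 * x0)
                 x0 (x0 + d) (Hi _ _)).
  replace (-1 * x0 + 2 * x0) with x0 in E by ring.
  replace (-1 * (x0 + d) + 2 * x0) with (x0 - d) in E by ring.
  rewrite <- (opp_RInt_swap (gauss c x0) (x0 - d) x0) in E by apply Hi.
  rewrite (RInt_ext _ (fun y => opp (gauss c x0 y))) in E.
  - rewrite (RInt_opp (V := R_CompleteNormedModule)) in E by apply Hi.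
    revert E. unfold opp; simpl. lra.
  - intros y _. change (-1 * gauss c x0 (-1 * y + 2 * x0) = - gauss c x0 y).
    unfold gauss. replace ((-1 * y + 2 * x0 - x0) ^ 2) with ((y - x0) ^ 2) by ring. ring.
Qed.

Lemma RInt_gauss_lower_bound s x0 d : 0 < s -> / s <= d ->
  / (3 * s) <= RInt (gauss (s ^ 2) x0) x0 (x0 + d).
Proof.
  intros Hs Hd. assert (Hs' : 0 < / s) by now apply Rinv_0_lt_compat.
  assert (Hi := gauss_ex_RInt (s ^ 2) x0).
  apply Rle_trans with (RInt (gauss (s ^ 2) x0) x0 (x0 + / s)).
  2: { apply RInt_subinterval_le; [intros; apply Rlt_le, gauss_pos | exact Hi | lra | lra | lra]. }
  apply Rle_trans with (RInt (fun _ => / 3) x0 (x0 + / s)).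
  { rewrite RInt_const. unfold scal; simpl; unfold mult; simpl. right. field. lra. }
  apply RInt_le; [lra | apply ex_RInt_const | apply Hi |].
  intros x Hx. unfold gauss.
  assert (Hsx : s ^ 2 * (x - x0) ^ 2 <= 1).
  { rewrite <- Rpow_mult_distr, <- (pow1 2). apply pow_incr. split; [nra|].
    replace 1 with (s * / s) by (field; lra). apply Rmult_le_compat_l; lra. }
  apply Rle_trans with (exp (Ropp 1)).
  - rewrite exp_Ropp. apply Rinv_le_contravar; [apply exp_pos | apply exp_le_3].
  - apply exp_le_compat. lra.
Qed.

Lemma gauss_tail_factor_small d B eps s : 0 < d -> 0 <= B -> 0 < eps -> 2 <= s ->
  6 * B / (eps * d ^ 2) <= s -> exp (- ((s ^ 2 - 1) * d ^ 2)) * B <= eps / (3 * s).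
Proof.
  intros Hd HB He Hs HsB.
  assert (Hd2 : 0 < d ^ 2) by now apply pow_lt.
  assert (Hz : 0 < (s ^ 2 - 1) * d ^ 2) by (apply Rmult_lt_0_compat; [simpl; nra | exact Hd2]).
  apply Rle_trans with (/ ((s ^ 2 - 1) * d ^ 2) * B).
  { apply Rmult_le_compat_r; [exact HB|]. rewrite exp_Ropp. apply Rinv_le_contravar; [exact Hz|].
    generalize (exp_ineq1_le ((s ^ 2 - 1) * d ^ 2)). lra. }
  assert (HB' : 6 * B <= s * (eps * d ^ 2)).
  { apply Rle_div_l in HsB; [lra | apply Rmult_lt_0_compat; lra]. }
  set (Z := (s ^ 2 - 1) * d ^ 2) in *.
  replace (/ Z * B) with (3 * s * B * / (3 * s) * / Z) by (field; lra).
  replace (eps / (3 * s)) with (eps * Z * / (3 * s) * / Z) by (field; lra).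
  apply Rmult_le_compat_r; [left; apply Rinv_0_lt_compat; lra|].
  apply Rmult_le_compat_r; [left; apply Rinv_0_lt_compat; lra|].
  assert (H1 : 3 * s * B <= s * s * (eps * d ^ 2) / 2) by nra.
  assert (H2 : s * s / 2 <= s ^ 2 - 1) by (simpl; nra).
  assert (H3 := Rmult_le_compat_l (eps * d ^ 2) _ _ ltac:(nra) H2).
  unfold Z. lra.
Qed.

Lemma RInt_gauss_tail (u : R -> R) c x0 d p q : 1 <= c -> p <= q ->
  ex_RInt (fun x => u x * gauss c x0 x) p q -> ex_RInt (fun x => Rabs (u x) * gauss 1 x0 x) p q ->
  (forall x, p < x < q -> d ^ 2 <= (x - x0) ^ 2) ->
  Rabs (RInt (fun x => u x * gauss c x0 x) p q)
    <= exp (- ((c - 1) * d ^ 2)) * RInt (fun x => Rabs (u x) * gauss 1 x0 x) p q.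
Proof.
  intros Hc Hpq Hi Hi1 Hfar. rewrite <- RInt_Rmult_l by exact Hi1.
  eapply Rle_trans; [apply abs_RInt_le; auto|].
  apply RInt_le; [exact Hpq | now apply (ex_RInt_norm (fun x => u x * gauss c x0 x))
    | now apply (@ex_RInt_scal R_NormedModule) |].
  intros x Hx. rewrite Rabs_mult, (Rabs_pos_eq (gauss c x0 x)) by apply Rlt_le, gauss_pos.
  replace (gauss c x0 x) with (exp (- ((c - 1) * (x - x0) ^ 2)) * gauss 1 x0 x)
    by (unfold gauss; rewrite <- exp_plus; f_equal; ring).
  assert (Hexp : exp (- ((c - 1) * (x - x0) ^ 2)) <= exp (- ((c - 1) * d ^ 2))).
  { apply exp_le_compat, Ropp_le_contravar, Rmult_le_compat_l; [lra | now apply Hfar]. }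
  assert (0 <= Rabs (u x) * gauss 1 x0 x)
    by (apply Rmult_le_pos; [apply Rabs_pos | apply Rlt_le, gauss_pos]).
  nra.
Qed.

(** * Gaussians as an approximate identity *)

Section Approximate_identity.
Variables (u : R -> R) (x0 a b B : R).
Hypothesis Hu : piecewise_regular u.
Hypothesis HB : forall r, 0 <= r -> RInt (fun x => Rabs (u x) * gauss 1 x0 x) (-r) r <= B.
Hypothesis Hmoments : forall c, 1 <= c ->
  is_RInt_gen (fun x => u x * gauss c x0 x) (Rbar_locally m_infty) (Rbar_locally p_infty) 0.
Hypothesis Hright : filterlim u (at_right x0) (locally a).
Hypothesis Hleft : filterlim u (at_left x0) (locally b).

Lemma u_gauss_ex_RInt c p q : ex_RInt (fun x => u x * gauss c x0 x) p q.
Proof.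
  apply (@piecewise_regular_ex_RInt R_CompleteNormedModule), piecewise_regular_Rmult;
    [exact Hu | apply gauss_piecewise_regular].
Qed.

Lemma abs_u_gauss_ex_RInt p q : ex_RInt (fun x => Rabs (u x) * gauss 1 x0 x) p q.
Proof.
  apply (@piecewise_regular_ex_RInt R_CompleteNormedModule), piecewise_regular_Rmult;
    [apply piecewise_regular_comp; [apply continuous_Rabs | exact Hu]
    | apply gauss_piecewise_regular].
Qed.

Lemma RInt_u_gauss_tails_le c d r : 1 <= c -> 0 < d -> - r <= x0 - d -> x0 + d <= r ->
  Rabs (RInt (fun x => u x * gauss c x0 x) (-r) (x0 - d))
    + Rabs (RInt (fun x => u x * gauss c x0 x) (x0 + d) r)
  <= exp (- ((c - 1) * d ^ 2)) * B.
Proof.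
  intros Hc Hd Hl Hr.
  set (J p q := RInt (fun x => Rabs (u x) * gauss 1 x0 x) p q).
  assert (H1 : Rabs (RInt (fun x => u x * gauss c x0 x) (-r) (x0 - d))
               <= exp (- ((c - 1) * d ^ 2)) * J (-r) (x0 - d)).
  { apply RInt_gauss_tail; auto using u_gauss_ex_RInt, abs_u_gauss_ex_RInt; try lra.
    intros x Hx. replace ((x - x0) ^ 2) with ((x0 - x) ^ 2) by ring. apply pow_incr. lra. }
  assert (H2 : Rabs (RInt (fun x => u x * gauss c x0 x) (x0 + d) r)
               <= exp (- ((c - 1) * d ^ 2)) * J (x0 + d) r).
  { apply RInt_gauss_tail; auto using u_gauss_ex_RInt, abs_u_gauss_ex_RInt; try lra.
    intros x Hx. apply pow_incr. lra. }
  assert (HJ : J (-r) (x0 - d) + J (x0 + d) r <= B).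
  { assert (HBr := HB r ltac:(lra)). unfold J.
    rewrite <- (RInt_Chasles _ (-r) (x0 - d) r), <- (RInt_Chasles _ (x0 - d) (x0 + d) r)
      in HBr by apply abs_u_gauss_ex_RInt.
    assert (0 <= RInt (fun x => Rabs (u x) * gauss 1 x0 x) (x0 - d) (x0 + d)).
    { apply RInt_ge_0; [lra | apply abs_u_gauss_ex_RInt |].
      intros; apply Rmult_le_pos; [apply Rabs_pos | apply Rlt_le, gauss_pos]. }
    unfold plus in HBr; simpl in HBr. lra. }
  assert (Hk := exp_pos (- ((c - 1) * d ^ 2))). nra.
Qed.

Lemma one_sided_limits_sum_gauss_estimate c d eps : 1 <= c -> 0 < d ->
  (forall x, x0 < x < x0 + d -> Rabs (u x - a) <= eps) ->
  (forall x, x0 - d < x < x0 -> Rabs (u x - b) <= eps) ->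
  Rabs (a + b) * RInt (gauss c x0) x0 (x0 + d)
    <= 2 * eps * RInt (gauss c x0) x0 (x0 + d) + exp (- ((c - 1) * d ^ 2)) * B.
Proof.
  intros Hc Hd Hnear_a Hnear_b. set (A := RInt (gauss c x0) x0 (x0 + d)).
  assert (HA0 : 0 <= A).
  { apply RInt_ge_0; [lra | apply gauss_ex_RInt | intros; apply Rlt_le, gauss_pos]. }
  apply Rle_plus_epsilon. intros eta Heta.
  destruct (RInt_symmetric_cvg (V := R_CompleteNormedModule) _ _ (Hmoments c Hc) _
              (locally_ball 0 (mkposreal eta Heta))) as [M HM].
  set (r := Rmax (M + 1) (Rabs x0 + d)).
  assert (HrM : M < r) by (unfold r; generalize (Rmax_l (M + 1) (Rabs x0 + d)); lra).
  assert (Hr : - r <= x0 - d /\ x0 + d <= r).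
  { assert (Hx0 : Rabs x0 <= r - d) by (unfold r; generalize (Rmax_r (M + 1) (Rabs x0 + d)); lra).
    apply Rabs_le_between in Hx0. lra. }
  set (I p q := RInt (fun x => u x * gauss c x0 x) p q).
  assert (HI : Rabs (I (-r) r) < eta).
  { assert (H := HM r HrM). change (Rabs (I (-r) r - 0) < eta) in H. now rewrite Rminus_0_r in H. }
  assert (Hsplit : I (-r) r = I (-r) (x0 - d) + I (x0 - d) x0 + I x0 (x0 + d) + I (x0 + d) r).
  { unfold I. rewrite <- (RInt_Chasles _ (-r) (x0 - d) r), <- (RInt_Chasles _ (x0 - d) x0 r),
      <- (RInt_Chasles _ x0 (x0 + d) r) by apply u_gauss_ex_RInt. unfold plus; simpl. ring. }
  assert (Hright_part : Rabs (I x0 (x0 + d) - a * A) <= eps * A).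
  { apply RInt_weighted_deviation; auto using u_gauss_ex_RInt, gauss_ex_RInt; try lra.
    intros; apply Rlt_le, gauss_pos. }
  assert (Hleft_part : Rabs (I (x0 - d) x0 - b * A) <= eps * A).
  { unfold A. rewrite <- RInt_gauss_reflect.
    apply RInt_weighted_deviation; auto using u_gauss_ex_RInt, gauss_ex_RInt; try lra.
    intros; apply Rlt_le, gauss_pos. }
  assert (Htails : Rabs (I (-r) (x0 - d)) + Rabs (I (x0 + d) r) <= exp (- ((c - 1) * d ^ 2)) * B)
    by exact (RInt_u_gauss_tails_le c d r Hc Hd (proj1 Hr) (proj2 Hr)).
  apply Rabs_def2 in HI. apply Rabs_le_between in Hright_part, Hleft_part.
  pose proof (proj1 (Rabs_le_between (I (-r) (x0 - d)) _) (Rle_refl _)) as Hl.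
  pose proof (proj1 (Rabs_le_between (I (x0 + d) r) _) (Rle_refl _)) as Hr'.
  rewrite <- (Rabs_pos_eq A) at 1 by exact HA0. rewrite <- Rabs_mult.
  apply Rabs_le_between. lra.
Qed.

Lemma one_sided_limits_sum_small eps : 0 < eps -> Rabs (a + b) <= 3 * eps.
Proof.
  intros Heps.
  assert (HB0 : 0 <= B).
  { eapply Rle_trans; [|apply (HB 0); lra]. rewrite Ropp_0, RInt_point. apply Rle_refl. }
  apply filterlim_locally with (eps := mkposreal eps Heps) in Hright as [d1 Hd1].
  apply filterlim_locally with (eps := mkposreal eps Heps) in Hleft as [d2 Hd2].
  set (d := Rmin d1 d2).
  assert (Hd : 0 < d) by (apply Rmin_pos; apply cond_pos).
  assert (Hdd1 : d <= d1) by apply Rmin_l. assert (Hdd2 : d <= d2) by apply Rmin_r.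
  assert (Hnear_a : forall x, x0 < x < x0 + d -> Rabs (u x - a) <= eps).
  { intros x Hx. apply Rlt_le, (Hd1 x); [|lra].
    change (Rabs (x - x0) < d1). rewrite Rabs_right by lra. lra. }
  assert (Hnear_b : forall x, x0 - d < x < x0 -> Rabs (u x - b) <= eps).
  { intros x Hx. apply Rlt_le, (Hd2 x); [|lra].
    change (Rabs (x - x0) < d2). rewrite Rabs_left by lra. lra. }
  (* a Gaussian this narrow puts mass [A >= 1/(3s)] on [x0, x0 + d] and at most [eps * A] outside *)
  set (s := Rmax (Rmax 2 (/ d)) (6 * B / (eps * d ^ 2))).
  assert (Hs2 : 2 <= s) by (eapply Rle_trans; [apply Rmax_l | apply Rmax_l]).
  assert (Hsd : / d <= s) by (eapply Rle_trans; [apply Rmax_r | apply Rmax_l]).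
  set (c := s ^ 2). assert (Hc : 1 <= c) by (unfold c; simpl; nra).
  set (A := RInt (gauss c x0) x0 (x0 + d)).
  assert (HA : / (3 * s) <= A).
  { apply RInt_gauss_lower_bound; [lra|].
    apply Rle_trans with (/ / d); [apply Rinv_le_contravar; [apply Rinv_0_lt_compat|]; lra|].
    rewrite Rinv_inv. lra. }
  assert (HA0 : 0 < A)
    by (apply Rlt_le_trans with (/ (3 * s)); [apply Rinv_0_lt_compat; lra | exact HA]).
  assert (Htail : exp (- ((c - 1) * d ^ 2)) * B <= eps * A).
  { eapply Rle_trans; [exact (gauss_tail_factor_small d B eps s Hd HB0 Heps Hs2 (Rmax_r _ _))|].
    unfold Rdiv. apply Rmult_le_compat_l; lra. }
  assert (H := one_sided_limits_sum_gauss_estimate c d eps Hc Hd Hnear_a Hnear_b). fold A in H.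
  apply (Rmult_le_reg_r A); lra.
Qed.

Lemma one_sided_limits_sum_zero : a + b = 0.
Proof.
  destruct (Req_dec (a + b) 0) as [E | E]; [exact E|].
  assert (Hpos : 0 < Rabs (a + b)) by now apply Rabs_pos_lt.
  assert (H := one_sided_limits_sum_small (Rabs (a + b) / 6) ltac:(lra)). lra.
Qed.

End Approximate_identity.

Section Uniqueness.
Variables f g : R -> C.
Hypotheses (Hf : SG f) (Hg : SG g).
Hypothesis Heq : forall phi, Schwartz phi ->
  int_R (fun x => (f x * phi x)%C) = int_R (fun x => (g x * phi x)%C).

Lemma SG_diff_piecewise_regular w : piecewise_regular (fun x => fst (w * (f x - g x))%C).
Proof.
  apply (piecewise_regular_comp2 (fun y z => fst (w * (y - z))%C)); [apply filterlim_Re_mult_sub | |];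
    now apply SG_piecewise_regular.
Qed.

Lemma SG_diff_gauss_moments w x0 c : 1 <= c ->
  is_RInt_gen (fun x => fst (w * (f x - g x))%C * gauss c x0 x)
    (Rbar_locally m_infty) (Rbar_locally p_infty) 0.
Proof.
  intros Hc. assert (Hphi := gauss_test_Schwartz w c x0 ltac:(lra)).
  assert (If := is_RInt_gen_fst _ _ _ _ (SG_mult_Schwartz_is_RInt_gen f _ Hf Hphi)).
  assert (Ig := is_RInt_gen_fst _ _ _ _ (SG_mult_Schwartz_is_RInt_gen g _ Hg Hphi)).
  rewrite Heq in If by exact Hphi.
  assert (H := is_RInt_gen_minus _ _ _ _ If Ig). rewrite minus_eq_zero in H.
  revert H. apply is_RInt_gen_ext. apply filter_forall. intros [p q] x _.
  unfold gauss_test, minus, plus, opp; simpl. ring.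
Qed.

Lemma SG_diff_gauss_abs_bound w x0 : exists B, forall r, 0 <= r ->
  RInt (fun x => Rabs (fst (w * (f x - g x))%C) * gauss 1 x0 x) (-r) r <= B.
Proof.
  assert (Hphi := gauss_test_Schwartz w 1 x0 Rlt_0_1).
  destruct (SG_mult_Schwartz_bound f _ Hf Hphi) as [Bf HBf].
  destruct (SG_mult_Schwartz_bound g _ Hg Hphi) as [Bg HBg].
  exists (Bf + Bg). intros r Hr.
  assert (Hint : forall h : R -> C, SG h -> forall p q,
    ex_RInt (fun x => Cmod (h x * gauss_test w 1 x0 x)) p q).
  { intros h Hh. apply (@piecewise_regular_ex_RInt R_CompleteNormedModule), piecewise_regular_Cmod.
    now apply SG_mult_Schwartz_regular. }
  eapply Rle_trans; [|apply Rplus_le_compat; [apply (HBf r Hr) | apply (HBg r Hr)]].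
  rewrite <- RInt_Rplus by auto.
  apply RInt_le; [lra | | apply (@ex_RInt_plus R_NormedModule); auto |].
  - apply (@piecewise_regular_ex_RInt R_CompleteNormedModule), piecewise_regular_Rmult;
      [apply piecewise_regular_comp; [apply continuous_Rabs | apply SG_diff_piecewise_regular]
      | apply gauss_piecewise_regular].
  - intros x _. assert (Hg1 := gauss_pos 1 x0 x).
    eapply Rle_trans; [apply Rmult_le_compat_r; [lra | apply re_le_Cmod]|].
    rewrite <- (Rabs_pos_eq (gauss 1 x0 x)), <- Cmod_R, <- Cmod_mult by lra.
    replace (w * (f x - g x) * RtoC (gauss 1 x0 x))%C
      with (f x * gauss_test w 1 x0 x - g x * gauss_test w 1 x0 x)%C by (unfold gauss_test; ring).
    unfold Cminus. rewrite <- (Cmod_opp (g x * _)). apply Cmod_triangle.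
Qed.

Lemma SG_eq_of_Schwartz_moments x0 : f x0 = g x0.
Proof.
  destruct (proj2 (proj1 Hf) x0) as [pf [mf [[Hpf Hmf] Ef]]].
  destruct (proj2 (proj1 Hg) x0) as [pg [mg [[Hpg Hmg] Eg]]].
  set (L := ((pf + mf) - (pg + mg))%C).
  (* testing against [conj L] times Gaussians isolates [Re (conj L * L) = |L|^2] *)
  set (w := Cconj L).
  destruct (SG_diff_gauss_abs_bound w x0) as [B HB].
  assert (Hsum : fst (w * (pf - pg))%C + fst (w * (mf - mg))%C = 0).
  { pose (u x := fst (w * (f x - g x))%C).
    apply (one_sided_limits_sum_zero u x0 _ _ B).
    - apply (SG_diff_piecewise_regular w).
    - exact HB.
    - intros c Hc. now apply SG_diff_gauss_moments.
    - apply (filterlim_comp_2 f g (fun y z => fst (w * (y - z))%C) Hpf Hpg), filterlim_Re_mult_sub.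
    - apply (filterlim_comp_2 f g (fun y z => fst (w * (y - z))%C) Hmf Hmg), filterlim_Re_mult_sub. }
  assert (HL : L = 0%C).
  { assert (Hnorm : fst L ^ 2 + snd L ^ 2 = 0).
    { rewrite <- Hsum. unfold w, L. simpl. ring. }
    clearbody L. destruct L as [l1 l2]. simpl in Hnorm.
    apply injective_projections; simpl; nra. }
  rewrite Ef, Eg. f_equal. unfold L in HL.
  replace (pf + mf)%C with ((pf + mf - (pg + mg)) + (pg + mg))%C by ring. rewrite HL. ring.
Qed.

End Uniqueness.

Theorem mainTheorem3 :
  (forall f phi : R -> C, SG f -> Schwartz phi ->
     piecewise_continuous (fun x => (f x * phi x)%C) /\
     abs_integrable (fun x => (f x * phi x)%C)) /\
  (forall f g : R -> C, SG f -> SG g ->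
     (forall phi : R -> C, Schwartz phi ->
        int_R (fun x => (f x * phi x)%C) = int_R (fun x => (g x * phi x)%C)) ->
     forall x : R, f x = g x).
Proof.
  split.
  - intros f phi Hf Hphi. split.
    + apply piecewise_continuous_mult_continuous; [apply Hf | now apply Schwartz_continuous].
    + now apply SG_mult_Schwartz_abs_integrable.
  - intros f g Hf Hg Heq x. now apply SG_eq_of_Schwartz_moments.
Qed.
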